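(* Let $d\ge2$ and let $H_1,H_2$ be half-spaces in $\mathbb{Z}^d$, i.e. $H_i=\{y\in\mathbb{Z}^d:\langle y,v_i\rangle\ge b_i\}$ for unit vectors $v_i\in\mathbb{R}^d$ (not necessarily coordinate directions) and $b_i\in\mathbb{R}$. For simple random walk $(X_t)$ let $T_i$ be the first hitting time of $H_i$. If $x\in\mathbb{Z}^d\setminus(H_1\cup H_2)$ and $h_i=b_i-\langle x,v_i\rangle>0$ denotes the Euclidean distance from $x$ to the hyperplane bounding $H_i$, then \[ \mathbb{P}_x(T_1>T_2)\le\frac52\,\frac{h_1+1}{h_2}\Big(1+\frac{1}{2h_2}\Big)^2. \]
   Context: $\mathbb{P}_x$ denotes the law of simple random walk on $\mathbb{Z}^d$ started at $x$. *)

From Stdlib Require Import Reals Lra ZArith Arith List Bool.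
Open Scope R_scope.

(* Points of Z^d are functions nat -> Z; only coordinates 0..d-1 matter.
   Vectors of R^d are functions nat -> R, coordinates 0..d-1. *)
Definition sumR (d : nat) (f : nat -> R) : R :=
  fold_right Rplus 0 (map f (seq 0 d)).

Definition inner (d : nat) (y : nat -> Z) (v : nat -> R) : R :=
  sumR d (fun i => IZR (y i) * v i).

Definition is_unit (d : nat) (v : nat -> R) : Prop :=
  sumR d (fun i => v i * v i) = 1.

Definition in_half (d : nat) (v : nat -> R) (b : R) (y : nat -> Z) : Prop :=
  b <= inner d y v.

Definition in_halfb (d : nat) (v : nat -> R) (b : R) (y : nat -> Z) : bool :=
  if Rle_dec b (inner d y v) then true else false.

Definition shift (y : nat -> Z) (i : nat) (s : Z) : nat -> Z :=
  fun k => if Nat.eqb k i then (y k + s)%Z else y k.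

(* first_hit2 d v1 b1 v2 b2 n y = P_y( T_2 = n and T_1 > T_2 ) for simple
   random walk on Z^d, where T_j is the first hitting time of H_j
   (T_j = 0 if the walk starts in H_j).  The event {T_2 = n < T_1} means the
   walk avoids H_1 u H_2 at times 0..n-1 and X_n lies in H_2 \ H_1. *)
Fixpoint first_hit2 (d : nat) (v1 : nat -> R) (b1 : R) (v2 : nat -> R) (b2 : R)
  (n : nat) (y : nat -> Z) : R :=
  match n with
  | O => if andb (in_halfb d v2 b2 y) (negb (in_halfb d v1 b1 y)) then 1 else 0
  | S m =>
      if orb (in_halfb d v1 b1 y) (in_halfb d v2 b2 y) then 0
      else / (2 * INR d) *
           sumR d (fun i => first_hit2 d v1 b1 v2 b2 m (shift y i 1%Z)
                          + first_hit2 d v1 b1 v2 b2 m (shift y i (-1)%Z))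
  end.

(* P_x(T_1 > T_2) = sum_n P_x(T_2 = n < T_1) is the limit of the partial sums *)
Definition prob_T1_gt_T2 (d : nat) (v1 : nat -> R) (b1 : R) (v2 : nat -> R)
  (b2 : R) (x : nat -> Z) (p : R) : Prop :=
  Un_cv (fun N => sum_f_R0 (fun n => first_hit2 d v1 b1 v2 b2 n x) N) p.

From Pilot Require Import Defs.
From Stdlib Require Import Reals ZArith Lra Lia List Bool.
Open Scope R_scope.

(* Let gap_j(y) = b_j - <y,v_j> (signed distance of y to the
   hyperplane bounding H_j), P = gap_1 + 1 and s = P + gap_2.  The barrier
     u = 5/2 * P/s  where 5/2 * P < s,   u = 1  elsewhere
   is nonnegative near {gap_1, gap_2 > -1}, equals 1 on H_2 \ H_1 and is
   superharmonic for simple random walk off H_1 u H_2: by an elementary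
   inequality (ratio_step_pair) the average of P/s over the steps +-e_i exceeds
   P/s by at most (v_2 i^2 - v_1 i^2)/s^2, which sums to 0 over i.
   A comparison principle (partial_sums_le_supersolution) bounds every partial
   sum of sum_n P_x(T_2 = n < T_1) by u(x); the partial sums increase, hence
   converge to some p <= u(x) <= 5/2 (h_1+1)/(h_1+1+h_2), below the bound. *)

Lemma fold_right_Rplus_acc (l : list R) (c : R) :
  fold_right Rplus c l = fold_right Rplus 0 l + c.
Proof. induction l as [|x l IH]; simpl; [lra | rewrite IH; lra]. Qed.

Lemma sumR_S (n : nat) (f : nat -> R) : sumR (S n) f = sumR n f + f n.
Proof.
  unfold sumR. rewrite seq_S, map_app, fold_right_app. simpl.
  rewrite fold_right_Rplus_acc. lra.
Qed.

Lemma sumR_ext (n : nat) (f g : nat -> R) :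
  (forall i, (i < n)%nat -> f i = g i) -> sumR n f = sumR n g.
Proof.
  induction n as [|n IH]; intros H; [reflexivity|].
  rewrite !sumR_S, IH, H; auto.
Qed.

Lemma sumR_le (n : nat) (f g : nat -> R) :
  (forall i, (i < n)%nat -> f i <= g i) -> sumR n f <= sumR n g.
Proof.
  induction n as [|n IH]; intros H; [unfold sumR; simpl; lra|].
  rewrite !sumR_S. assert (sumR n f <= sumR n g) by (apply IH; auto).
  specialize (H n ltac:(lia)). lra.
Qed.

Lemma sumR_plus (n : nat) (f g : nat -> R) :
  sumR n (fun i => f i + g i) = sumR n f + sumR n g.
Proof. induction n as [|n IH]; [unfold sumR; simpl; lra|]. rewrite !sumR_S, IH. lra. Qed.

Lemma sumR_scal (n : nat) (c : R) (f : nat -> R) :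
  sumR n (fun i => c * f i) = c * sumR n f.
Proof. induction n as [|n IH]; [unfold sumR; simpl; lra|]. rewrite !sumR_S, IH. lra. Qed.

Lemma sumR_const (n : nat) (c : R) : sumR n (fun _ => c) = INR n * c.
Proof.
  induction n as [|n IH]; [unfold sumR; simpl; lra|].
  rewrite !sumR_S, IH, S_INR. lra.
Qed.

Lemma sumR_nonneg (n : nat) (f : nat -> R) :
  (forall i, (i < n)%nat -> 0 <= f i) -> 0 <= sumR n f.
Proof.
  intros H. apply Rle_trans with (sumR n (fun _ => 0)).
  - rewrite sumR_const. lra.
  - apply sumR_le. exact H.
Qed.

Lemma sumR_term (n : nat) (f : nat -> R) (i : nat) :
  (forall k, (k < n)%nat -> 0 <= f k) -> (i < n)%nat -> f i <= sumR n f.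
Proof.
  induction n as [|n IH]; intros H Hi; [lia|]. rewrite sumR_S.
  destruct (Nat.eq_dec i n) as [->|Hne].
  - assert (0 <= sumR n f) by (apply sumR_nonneg; auto). lra.
  - assert (f i <= sumR n f) by (apply IH; auto; lia).
    specialize (H n ltac:(lia)). lra.
Qed.

Lemma unit_coord_sq (d : nat) (v : nat -> R) (i : nat) :
  is_unit d v -> (i < d)%nat -> v i * v i <= 1.
Proof.
  intros U Hi. unfold is_unit in U. rewrite <- U.
  apply (sumR_term d (fun k => v k * v k)); auto. intros; nra.
Qed.

Lemma unit_coord_bound (d : nat) (v : nat -> R) (i : nat) :
  is_unit d v -> (i < d)%nat -> -1 <= v i <= 1.
Proof. intros U Hi. pose proof (unit_coord_sq d v i U Hi). nra. Qed.

Definition gap (d : nat) (v : nat -> R) (b : R) (y : nat -> Z) : R :=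
  b - inner d y v.

Lemma in_halfb_true_iff (d : nat) (v : nat -> R) (b : R) (y : nat -> Z) :
  in_halfb d v b y = true <-> gap d v b y <= 0.
Proof. unfold in_halfb, gap; destruct Rle_dec; split; intros; lra || discriminate. Qed.

Lemma in_halfb_false_iff (d : nat) (v : nat -> R) (b : R) (y : nat -> Z) :
  in_halfb d v b y = false <-> 0 < gap d v b y.
Proof. unfold in_halfb, gap; destruct Rle_dec; split; intros; lra || discriminate. Qed.

Lemma inner_shift (d : nat) (y : nat -> Z) (v : nat -> R) (i : nat) (s : Z) :
  (i < d)%nat -> inner d (Defs.shift y i s) v = inner d y v + IZR s * v i.
Proof.
  unfold inner. induction d as [|d IH]; intros Hi; [lia|]. rewrite !sumR_S.
  destruct (Nat.eq_dec i d) as [->|Hne].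
  - rewrite (sumR_ext d (fun k => IZR (Defs.shift y d s k) * v k) (fun k => IZR (y k) * v k)).
    + unfold Defs.shift. rewrite Nat.eqb_refl, plus_IZR. ring.
    + intros k Hk. unfold Defs.shift. replace (Nat.eqb k d) with false; auto.
      symmetry; apply Nat.eqb_neq; lia.
  - rewrite IH by lia. unfold Defs.shift at 1.
    replace (Nat.eqb d i) with false by (symmetry; apply Nat.eqb_neq; lia). ring.
Qed.

Lemma gap_shift (d : nat) (v : nat -> R) (b : R) (y : nat -> Z) (i : nat) (s : Z) :
  (i < d)%nat -> gap d v b (Defs.shift y i s) = gap d v b y - IZR s * v i.
Proof. intros Hi. unfold gap. rewrite inner_shift by exact Hi. ring. Qed.

Lemma gap_unit_step (d : nat) (v : nat -> R) (b : R) (y : nat -> Z) (i : nat) (s : Z) :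
  is_unit d v -> (i < d)%nat -> (s = 1 \/ s = -1)%Z ->
  gap d v b y - 1 <= gap d v b (Defs.shift y i s).
Proof.
  intros U Hi Hs. rewrite gap_shift by exact Hi.
  pose proof (unit_coord_bound d v i U Hi).
  destruct Hs as [-> | ->]; simpl IZR; lra.
Qed.

Definition nbr_avg (d : nat) (f : (nat -> Z) -> R) (y : nat -> Z) : R :=
  / (2 * INR d) * sumR d (fun i => f (Defs.shift y i 1%Z) + f (Defs.shift y i (-1)%Z)).

Lemma nbr_avg_le (d : nat) (f g : (nat -> Z) -> R) (y : nat -> Z) :
  (0 < d)%nat ->
  (forall i s, (i < d)%nat -> (s = 1 \/ s = -1)%Z -> f (Defs.shift y i s) <= g (Defs.shift y i s)) ->
  nbr_avg d f y <= nbr_avg d g y.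
Proof.
  intros Hd H. assert (0 < INR d) by (apply lt_0_INR; lia).
  unfold nbr_avg. apply Rmult_le_compat_l; [left; apply Rinv_0_lt_compat; lra|].
  apply sumR_le. intros i Hi. apply Rplus_le_compat; apply H; auto.
Qed.

Lemma nbr_avg_const (d : nat) (c : R) (y : nat -> Z) :
  (0 < d)%nat -> nbr_avg d (fun _ => c) y = c.
Proof.
  intros Hd. assert (0 < INR d) by (apply lt_0_INR; lia).
  unfold nbr_avg. rewrite sumR_const. field. lra.
Qed.

Lemma nbr_avg_sum (d : nat) (f : nat -> (nat -> Z) -> R) (N : nat) (y : nat -> Z) :
  sum_f_R0 (fun n => nbr_avg d (f n) y) N =
  nbr_avg d (fun z => sum_f_R0 (fun n => f n z) N) y.
Proof.
  induction N as [|N IH]; [reflexivity|]. simpl. rewrite IH. unfold nbr_avg.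
  rewrite <- Rmult_plus_distr_l, <- sumR_plus. f_equal.
  apply sumR_ext. intros; lra.
Qed.

Lemma bounded_series_cv (a : nat -> R) (M : R) :
  (forall n, 0 <= a n) -> (forall N, sum_f_R0 a N <= M) ->
  exists l, Un_cv (fun N => sum_f_R0 a N) l /\ l <= M.
Proof.
  intros Ha HM.
  assert (Hg : Un_growing (fun N => sum_f_R0 a N)).
  { intro n. rewrite tech5. pose proof (Ha (S n)). lra. }
  assert (Hub : has_ub (fun N => sum_f_R0 a N)).
  { exists M. intros z [N ->]. apply HM. }
  destruct (growing_cv _ Hg Hub) as [l Hl].
  exists l. split; [exact Hl|].
  apply (Rle_cv_lim (Vn := fun _ => M) HM Hl).
  intros eps Heps. exists 0%nat. intros n _. unfold Rdist.
  rewrite Rminus_diag, Rabs_R0. lra.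
Qed.

Section Comparison.

Variables (d : nat) (v1 v2 : nat -> R) (b1 b2 : R).
Hypothesis d_pos : (0 < d)%nat.
Hypothesis unit1 : is_unit d v1.
Hypothesis unit2 : is_unit d v2.

Notation gap1 := (gap d v1 b1).
Notation gap2 := (gap d v2 b2).
Notation fh := (first_hit2 d v1 b1 v2 b2).

Lemma first_hit2_nonneg (n : nat) (y : nat -> Z) : 0 <= fh n y.
Proof.
  revert y. induction n as [|n IH]; intros y; simpl.
  - destruct (_ && _); lra.
  - destruct (_ || _); [lra|].
    apply Rle_trans with (nbr_avg d (fun _ => 0) y).
    + rewrite nbr_avg_const by exact d_pos. lra.
    + apply nbr_avg_le; auto.
Qed.

Lemma partial_sums_on_boundary (y : nat -> Z) (N : nat) :
  orb (in_halfb d v1 b1 y) (in_halfb d v2 b2 y) = true ->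
  sum_f_R0 (fun n => fh n y) N = fh 0 y.
Proof.
  intros H. induction N as [|N IH]; [reflexivity|].
  simpl. simpl in IH. rewrite IH, H. lra.
Qed.

Lemma partial_sums_off_boundary (y : nat -> Z) (N : nat) :
  orb (in_halfb d v1 b1 y) (in_halfb d v2 b2 y) = false ->
  sum_f_R0 (fun n => fh n y) (S N) = nbr_avg d (fun z => sum_f_R0 (fun n => fh n z) N) y.
Proof.
  intros H. rewrite <- nbr_avg_sum, decomp_sum by lia. simpl pred.
  simpl fh at 1. apply orb_false_iff in H as [H1 H2]. rewrite H1, H2, Rplus_0_l.
  apply sum_eq. intros k _. simpl. rewrite H1, H2. reflexivity.
Qed.

Variable u : (nat -> Z) -> R.
Hypothesis u_nonneg : forall y, -1 < gap1 y -> -1 < gap2 y -> 0 <= u y.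
Hypothesis u_target : forall y, 0 < gap1 y -> gap2 y <= 0 -> 1 <= u y.
Hypothesis u_super : forall y, 0 < gap1 y -> 0 < gap2 y -> nbr_avg d u y <= u y.

Lemma first_hit2_0_le (y : nat -> Z) :
  -1 < gap1 y -> -1 < gap2 y -> fh 0 y <= u y.
Proof.
  intros Hy1 Hy2. simpl.
  case_eq (in_halfb d v1 b1 y); intro E1; case_eq (in_halfb d v2 b2 y); intro E2;
    simpl; try (apply u_nonneg; auto).
  apply in_halfb_false_iff in E1. apply in_halfb_true_iff in E2. auto.
Qed.

Lemma partial_sums_le_supersolution (N : nat) (y : nat -> Z) :
  -1 < gap1 y -> -1 < gap2 y -> sum_f_R0 (fun n => fh n y) N <= u y.
Proof.
  revert y. induction N as [|N IH]; intros y Hy1 Hy2.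
  - apply first_hit2_0_le; auto.
  - case_eq (orb (in_halfb d v1 b1 y) (in_halfb d v2 b2 y)); intro Hbd.
    + rewrite partial_sums_on_boundary by exact Hbd. apply first_hit2_0_le; auto.
    + rewrite partial_sums_off_boundary by exact Hbd.
      apply orb_false_iff in Hbd as [E1 E2].
      apply in_halfb_false_iff in E1. apply in_halfb_false_iff in E2.
      apply Rle_trans with (nbr_avg d u y); [|apply u_super; auto].
      apply nbr_avg_le; [exact d_pos|]. intros i s Hi Hs.
      pose proof (gap_unit_step d v1 b1 y i s unit1 Hi Hs).
      pose proof (gap_unit_step d v2 b2 y i s unit2 Hi Hs).
      apply IH; lra.
Qed.

End Comparison.

(* The elementary inequality behind superharmonicity of P/s: moving (P, s) to
   (P -+ a, s -+ (a+b)) raises the average of P/s by at most (b^2 - a^2)/s^2,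
   provided s is large compared with P. *)
Lemma ratio_step_pair (a b P s : R) :
  a * a <= 1 -> b * b <= 1 -> 1 < P -> 5/2 * P < s ->
  (P - a) / (s - (a + b)) + (P + a) / (s + (a + b)) <= 2 * P / s + (b * b - a * a) / (s * s).
Proof.
  intros Ha Hb HP Hs.
  assert (Hab : (a + b) * (a + b) <= 4) by nra.
  assert (Hm : 0 < s - (a + b)) by nra.
  assert (Hp : 0 < s + (a + b)) by nra.
  assert (Hgap : 1 <= (s - 2 * P) * s).
  { assert (1/2 < s - 2 * P) by lra. assert (5/2 < s) by lra. nra. }
  set (w := (a + b) * (a + b) / (s * ((s - (a + b)) * (s + (a + b))))).
  assert (Hdiff : (P - a) / (s - (a + b)) + (P + a) / (s + (a + b))
                  - (2 * P / s + (b * b - a * a) / (s * s))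
                  = w * ((2 * P - s) + (b * b - a * a) / s)).
  { unfold w. field. repeat split; lra. }
  assert (Hw : 0 <= w).
  { unfold w, Rdiv. apply Rmult_le_pos; [apply Rle_0_sqr|].
    left; apply Rinv_0_lt_compat, Rmult_lt_0_compat; [lra|].
    apply Rmult_lt_0_compat; assumption. }
  assert (Hneg : (2 * P - s) + (b * b - a * a) / s <= 0).
  { assert ((b * b - a * a) / s <= s - 2 * P).
    { apply (Rmult_le_reg_r s); [lra|]. unfold Rdiv.
      rewrite Rmult_assoc, Rinv_l by lra. nra. }
    lra. }
  assert (w * ((2 * P - s) + (b * b - a * a) / s) <= 0) by nra.
  lra.
Qed.

Lemma scaled_ratio_le (c p s t : R) : 0 < s -> c * p <= t * s -> c * (p / s) <= t.
Proof.
  intros Hs H. replace (c * (p / s)) with (c * p * / s) by (field; lra).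
  apply (Rmult_le_reg_r s); [exact Hs|].
  rewrite Rmult_assoc, Rinv_l, Rmult_1_r by lra. exact H.
Qed.

Lemma scaled_ratio_ge (c p s t : R) : 0 < s -> t * s <= c * p -> t <= c * (p / s).
Proof.
  intros Hs H. replace (c * (p / s)) with (c * p * / s) by (field; lra).
  apply (Rmult_le_reg_r s); [exact Hs|].
  rewrite Rmult_assoc, Rinv_l, Rmult_1_r by lra. exact H.
Qed.

Section Barrier.

Variables (d : nat) (v1 v2 : nat -> R) (b1 b2 : R).
Hypothesis d_pos : (0 < d)%nat.
Hypothesis unit1 : is_unit d v1.
Hypothesis unit2 : is_unit d v2.

Notation gap1 := (gap d v1 b1).
Notation gap2 := (gap d v2 b2).

Definition gap_ratio (y : nat -> Z) : R := (gap1 y + 1) / (gap1 y + 1 + gap2 y).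

(* Summing ratio_step_pair over the coordinates: the correction terms cancel
   because sum_i v_1 i^2 = sum_i v_2 i^2 = 1. *)
Lemma gap_ratio_superharmonic (y : nat -> Z) :
  0 < gap1 y -> 5/2 * (gap1 y + 1) < gap1 y + 1 + gap2 y ->
  nbr_avg d gap_ratio y <= gap_ratio y.
Proof.
  intros H1 Hs. set (s := gap1 y + 1 + gap2 y) in *. set (P := gap1 y + 1) in *.
  assert (Hd : 0 < INR d) by (apply lt_0_INR; lia).
  unfold nbr_avg.
  apply Rle_trans with (/ (2 * INR d) * sumR d (fun i =>
    2 * P / s + / (s * s) * (v2 i * v2 i) + - / (s * s) * (v1 i * v1 i))).
  - apply Rmult_le_compat_l; [left; apply Rinv_0_lt_compat; lra|].
    apply sumR_le. intros i Hi. unfold gap_ratio.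
    rewrite !(gap_shift d v1), !(gap_shift d v2) by exact Hi. simpl IZR.
    pose proof (ratio_step_pair (v1 i) (v2 i) P s (unit_coord_sq d v1 i unit1 Hi)
                  (unit_coord_sq d v2 i unit2 Hi) ltac:(unfold P; lra) Hs) as Hstep.
    replace (gap1 y - 1 * v1 i + 1) with (P - v1 i) by (unfold P; ring).
    replace (gap1 y - -1 * v1 i + 1) with (P + v1 i) by (unfold P; ring).
    replace (P - v1 i + (gap2 y - 1 * v2 i)) with (s - (v1 i + v2 i)) by (unfold s, P; ring).
    replace (P + v1 i + (gap2 y - -1 * v2 i)) with (s + (v1 i + v2 i)) by (unfold s, P; ring).
    unfold Rdiv in *. lra.
  - rewrite !sumR_plus, !sumR_scal, sumR_const.
    unfold is_unit in unit1, unit2. rewrite unit1, unit2.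
    change (gap_ratio y) with (P / s). right. field. unfold P in Hs; lra.
Qed.

Definition barrier (y : nat -> Z) : R :=
  if Rlt_dec (5/2 * (gap1 y + 1)) (gap1 y + 1 + gap2 y) then 5/2 * gap_ratio y else 1.

Lemma barrier_nonneg (y : nat -> Z) : -1 < gap1 y -> 0 <= barrier y.
Proof.
  intros H1. unfold barrier, gap_ratio. destruct Rlt_dec; [|lra].
  unfold Rdiv. apply Rmult_le_pos; [lra|].
  apply Rmult_le_pos; [lra | left; apply Rinv_0_lt_compat; lra].
Qed.

Lemma barrier_le_1 (y : nat -> Z) : -1 < gap1 y -> barrier y <= 1.
Proof.
  intros H1. unfold barrier, gap_ratio. destruct Rlt_dec; [|lra].
  apply scaled_ratio_le; lra.
Qed.

Lemma barrier_target (y : nat -> Z) : 0 < gap1 y -> gap2 y <= 0 -> 1 <= barrier y.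
Proof. intros H1 H2. unfold barrier. destruct Rlt_dec; lra. Qed.

Lemma barrier_le_ratio (y : nat -> Z) :
  -1 < gap1 y -> 0 < gap1 y + 1 + gap2 y -> barrier y <= 5/2 * gap_ratio y.
Proof.
  intros H1 Hs. unfold barrier. destruct Rlt_dec as [|Hge]; [lra|].
  unfold gap_ratio. apply scaled_ratio_ge; lra.
Qed.

Lemma barrier_superharmonic (y : nat -> Z) :
  0 < gap1 y -> 0 < gap2 y -> nbr_avg d barrier y <= barrier y.
Proof.
  intros H1 H2.
  assert (Hnbr : forall i s, (i < d)%nat -> (s = 1 \/ s = -1)%Z ->
            gap1 y - 1 <= gap1 (Defs.shift y i s) /\ gap2 y - 1 <= gap2 (Defs.shift y i s)).
  { intros i s Hi Hs. split; apply gap_unit_step; auto. }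
  unfold barrier at 2. destruct Rlt_dec as [Hs|Hs].
  - apply Rle_trans with (nbr_avg d (fun z => 5/2 * gap_ratio z) y).
    + apply nbr_avg_le; [exact d_pos|]. intros i s Hi Hsgn.
      destruct (Hnbr i s Hi Hsgn). apply barrier_le_ratio; lra.
    + unfold nbr_avg. rewrite (sumR_ext d _ (fun i => 5/2 *
        (gap_ratio (Defs.shift y i 1%Z) + gap_ratio (Defs.shift y i (-1)%Z))))
        by (intros; ring).
      rewrite sumR_scal.
      pose proof (gap_ratio_superharmonic y H1 Hs) as Hsup. unfold nbr_avg in Hsup. nra.
  - apply Rle_trans with (nbr_avg d (fun _ => 1) y).
    + apply nbr_avg_le; [exact d_pos|]. intros i s Hi Hsgn.
      destruct (Hnbr i s Hi Hsgn). apply barrier_le_1; lra.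
    + rewrite nbr_avg_const by exact d_pos. lra.
Qed.

End Barrier.

Lemma barrier_value_le_bound (h1 h2 : R) :
  0 < h1 -> 0 < h2 ->
  5/2 * ((h1 + 1) / (h1 + 1 + h2)) <= 5/2 * ((h1 + 1) / h2) * (1 + 1 / (2 * h2)) ^ 2.
Proof.
  intros H1 H2.
  assert (Hden : (h1 + 1) / (h1 + 1 + h2) <= (h1 + 1) / h2).
  { unfold Rdiv. apply Rmult_le_compat_l; [lra|]. apply Rinv_le_contravar; lra. }
  assert (Hratio : 0 <= (h1 + 1) / h2).
  { unfold Rdiv. apply Rmult_le_pos; [lra | left; apply Rinv_0_lt_compat; lra]. }
  assert (Hcorr : 1 <= (1 + 1 / (2 * h2)) ^ 2).
  { assert (0 <= 1 / (2 * h2)).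
    { unfold Rdiv. apply Rmult_le_pos; [lra | left; apply Rinv_0_lt_compat; lra]. }
    simpl. nra. }
  nra.
Qed.

Theorem lemma5p4 (d : nat) (v1 v2 : nat -> R) (b1 b2 : R) (x : nat -> Z) :
  (2 <= d)%nat ->
  is_unit d v1 -> is_unit d v2 ->
  ~ in_half d v1 b1 x -> ~ in_half d v2 b2 x ->
  let h1 := b1 - inner d x v1 in
  let h2 := b2 - inner d x v2 in
  exists p, prob_T1_gt_T2 d v1 b1 v2 b2 x p /\
    p <= 5 / 2 * ((h1 + 1) / h2) * (1 + 1 / (2 * h2)) ^ 2.
Proof.
  intros Hd U1 U2 Hx1 Hx2 h1 h2.
  unfold in_half in Hx1, Hx2.
  assert (Hd_pos : (0 < d)%nat) by lia.
  assert (H1 : 0 < h1) by (unfold h1; lra).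
  assert (H2 : 0 < h2) by (unfold h2; lra).
  set (u := barrier d v1 v2 b1 b2).
  assert (Hsums : forall N, sum_f_R0 (fun n => first_hit2 d v1 b1 v2 b2 n x) N <= u x).
  { intro N. apply (partial_sums_le_supersolution d v1 v2 b1 b2 Hd_pos U1 U2 u).
    - intros y Hy1 _. apply barrier_nonneg; exact Hy1.
    - intros y Hy1 Hy2. apply barrier_target; assumption.
    - intros y Hy1 Hy2. apply (barrier_superharmonic d v1 v2 b1 b2 Hd_pos U1 U2); assumption.
    - change (-1 < h1). lra.
    - change (-1 < h2). lra. }
  destruct (bounded_series_cv _ (u x) (fun n => first_hit2_nonneg d v1 v2 b1 b2 Hd_pos n x) Hsums)
    as [p [Hcv Hp]].
  exists p. split; [exact Hcv|].
  assert (Hu : u x <= 5/2 * ((h1 + 1) / (h1 + 1 + h2))).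
  { apply barrier_le_ratio; [change (-1 < h1) | change (0 < h1 + 1 + h2)]; lra. }
  pose proof (barrier_value_le_bound h1 h2 H1 H2). lra.
Qed.
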